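(* Let $\kappa_0,\kappa_{-1},\kappa_2,\kappa_3>0$ and $j\in\mathbb N$. Consider the continuous-time Markov chain on $\mathbb N_0$ of the mass-action reaction network $\varnothing\rightleftharpoons S$ (rates $\kappa_0$, $\kappa_{-1}$), $3S\to2S$ (rate $\kappa_3$), $2S\to(2+j)S$ (rate $\kappa_2$), i.e. with transitions $x\to x+1$ at rate $\kappa_0$, $x\to x-1$ at rate $\kappa_{-1}x+\kappa_3x(x-1)(x-2)$, and $x\to x+j$ at rate $\kappa_2x(x-1)$ (when $j=1$ the last two upward rates add). Then every stationary distribution $\pi$ of this chain satisfies $\pi\in\mathcal P^{1+}_{1/j}\cap\mathcal P^{1-}_{1}$.
   Context: A stationary distribution is a probability measure $\pi$ on $\mathbb N_0$ satisfying the master equation $0=\sum_{\omega}\lambda_\omega(x-\omega)\pi(x-\omega)-\sum_\omega\lambda_\omega(x)\pi(x)$ for all $x$, where $\lambda_\omega(x)$ is the rate of $x\to x+\omega$ (zero at negative arguments). $T_\pi(x)=\sum_{y\ge x}\pi(y)$. For non-negative $f,g$, $f\lesssim g$ (equivalently $g\gtrsim f$) means there are $C,N>0$ with $f(x)\le Cg(x)$ for all $x\ge N$; $\exp(-h(x)(1+o(1)))$ means $\exp(-h(x)(1+\epsilon(x)))$ for some $\epsilon(x)\to0$. $\mathcal P^{1+}_a$ ($a>0$) is the set of probability distributions $\pi$ with $T_\pi(x)\lesssim\exp(-ax\log x(1+o(1)))$, and $\mathcal P^{1-}_a$ those with $T_\pi(x)\gtrsim\exp(-ax\log x(1+o(1)))$.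 *)

From Stdlib Require Import Reals ZArith List.
From Coquelicot Require Import Coquelicot.
Open Scope R_scope.

(* A transition of a chain on N_0: jump vector omega (an integer) and
   rate function lambda_omega : nat -> R (rates at negative states are 0,
   handled by the guard in [inflow]). Several entries with the same omega
   have their rates added. *)
Definition transition := (Z * (nat -> R))%type.

Definition inflow (pi : nat -> R) (x : nat) (t : transition) : R :=
  let (om, lam) := t in
  let y := (Z.of_nat x - om)%Z in
  if Z_lt_dec y 0 then 0 else lam (Z.to_nat y) * pi (Z.to_nat y).

Definition outflow (pi : nat -> R) (x : nat) (t : transition) : R :=
  let (om, lam) := t in lam x * pi x.

Definition sumR (l : list R) : R := fold_right Rplus 0 l.

Definition master_eq (ts : list transition) (pi : nat -> R) : Prop :=
  forall x : nat,
    0 = sumR (map (inflow pi x) ts) - sumR (map (outflow pi x) ts).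

Definition prob_dist (pi : nat -> R) : Prop :=
  (forall x, 0 <= pi x) /\ is_series pi 1.

Definition stationary (ts : list transition) (pi : nat -> R) : Prop :=
  prob_dist pi /\ master_eq ts pi.

Definition tail (pi : nat -> R) (x : nat) : R := Series (fun k => pi (x + k)%nat).

Definition lesssim (f g : nat -> R) : Prop :=
  exists (C : R) (N : nat), 0 < C /\ (0 < N)%nat /\
    forall x : nat, (N <= x)%nat -> f x <= C * g x.

Definition xlogx_profile (a : R) (eps : nat -> R) (x : nat) : R :=
  exp (- (a * INR x * ln (INR x)) * (1 + eps x)).

Definition P1plus (a : R) (pi : nat -> R) : Prop :=
  prob_dist pi /\
  exists eps : nat -> R, is_lim_seq eps 0 /\ lesssim (tail pi) (xlogx_profile a eps).

Definition P1minus (a : R) (pi : nat -> R) : Prop :=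
  prob_dist pi /\
  exists eps : nat -> R, is_lim_seq eps 0 /\ lesssim (xlogx_profile a eps) (tail pi).

Definition network (k0 km1 k2 k3 : R) (j : nat) : list transition :=
  (1%Z, fun _ => k0) ::
  ((-1)%Z, fun x => km1 * INR x + k3 * INR x * (INR x - 1) * (INR x - 2)) ::
  (Z.of_nat j, fun x => k2 * INR x * (INR x - 1)) :: nil.

(* The proof rests on a flux balance across the cut between x and x+1: for a
   chain with jumps +1, -1 and +j, the stationary mass leaving {0..x} upwards
   equals the mass entering it from x+1, i.e.
     death(x+1) pi(x+1) = birth(x) pi(x) + sum_{x-j < y <= x} burst(y) pi(y).
   For our network death(x) ~ k3 x^3 and burst(x) ~ k2 x^2.
   - Lower bound: keeping only the term y = x gives the ratio bound
     pi(x+1) >= c/(x+1) pi(x), so pi(x) (hence T_pi(x)) dominates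
     c^x / x!, i.e. exp(-x log x - K x).
   - Upper bound: bounding every window term by the window maximum gives
     pi(x) <= A/x * max_{x-j <= y < x} pi(y).  The profile
     U(x) = exp(-(1/j) x log x + K x) is a super-solution of this recursion,
     so pi <= B U by strong induction; U eventually decays geometrically, so
     T_pi <= 2 B U.
   Both estimates are then repackaged into the o(1) form of P^{1+} and P^{1-},
   using eps(x) = const / log x. *)

From Stdlib Require Import Reals ZArith Lra Lia Psatz Classical.
From Coquelicot Require Import Coquelicot.
Open Scope R_scope.

Lemma exp_monotone x y : x <= y -> exp x <= exp y.
Proof.
  intro Hxy. destruct (Req_dec x y) as [-> | Hne]; [lra |].
  left. apply exp_increasing. lra.
Qed.

Lemma exp_scaled c d e : 0 < c -> 0 < d -> c / d * exp e = exp (ln c - ln d + e).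
Proof.
  intros Hc Hd. rewrite !exp_plus. unfold Rminus. rewrite exp_plus, exp_Ropp, !exp_ln by lra.
  field. lra.
Qed.

Lemma ln_nonneg X : 1 <= X -> 0 <= ln X.
Proof. intro HX. rewrite <- ln_1. apply ln_le; lra. Qed.

Lemma ln_increment_le X Y : 0 < Y -> Y <= X -> Y * (ln X - ln Y) <= X - Y.
Proof.
  intros HY HXY. pose proof (exp_ineq1_le (ln (X / Y))) as Hexp.
  rewrite exp_ln, ln_div in Hexp by (try apply Rdiv_lt_0_compat; lra).
  apply (Rmult_le_compat_l Y) in Hexp; [| lra].
  replace (Y * (X / Y)) with X in Hexp by (field; lra). lra.
Qed.

Lemma const_div_ln_vanishes K : is_lim_seq (fun n => K / ln (INR n)) 0.
Proof.
  replace (Finite 0) with (Rbar_mult K (Rbar_inv p_infty))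
    by (simpl; rewrite Rmult_0_r; reflexivity).
  apply (is_lim_seq_scal_l (fun n => / ln (INR n))).
  apply is_lim_seq_inv; [| discriminate].
  apply (is_lim_comp_seq ln INR p_infty p_infty).
  - exact is_lim_ln_p.
  - exists 0%nat. intros; discriminate.
  - exact is_lim_seq_INR.
Qed.

Definition xlogx_exponent (a K X : R) : R := - a * (X * ln X) + K * X.

Lemma exponent_unit_step a K Y : 0 <= a -> 1 <= Y ->
  xlogx_exponent a K (Y + 1) <= xlogx_exponent a K Y + K - a * ln (Y + 1).
Proof.
  intros Ha HY.
  assert (Hmono : ln Y <= ln (Y + 1)) by (apply ln_le; lra).
  assert (Hgrowth : ln (Y + 1) <= (Y + 1) * ln (Y + 1) - Y * ln Y) by nra.
  unfold xlogx_exponent. nra.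
Qed.

Lemma exponent_window_step a K X Y : 0 < a -> 0 <= K -> 1 <= Y ->
  1 <= X - Y -> a * (X - Y) <= 1 ->
  xlogx_exponent a K Y + K - 1 - ln X <= xlogx_exponent a K X.
Proof.
  intros Ha HK HY Hd Had.
  pose proof (ln_increment_le X Y ltac:(lra) ltac:(lra)) as Hinc.
  pose proof (ln_nonneg X ltac:(lra)) as HlnX.
  assert (Hgrowth : X * ln X - Y * ln Y <= (X - Y) * (ln X + 1)) by nra.
  assert (Hscaled : a * (X * ln X - Y * ln Y) <= ln X + 1).
  { apply Rle_trans with (a * ((X - Y) * (ln X + 1))); [apply Rmult_le_compat_l; lra |].
    rewrite <- Rmult_assoc. nra. }
  unfold xlogx_exponent. nra.
Qed.

Lemma xlogx_profile_as_exponent a c x : a <> 0 -> (2 <= x)%nat ->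
  xlogx_profile a (fun n => c / ln (INR n)) x
  = exp (xlogx_exponent a (- (a * c)) (INR x)).
Proof.
  intros Ha Hx.
  assert (Hln : 0 < ln (INR x)).
  { rewrite <- ln_1. apply ln_increasing; [lra |].
    pose proof (le_INR 2 x Hx). simpl (INR 2) in *. lra. }
  unfold xlogx_profile, xlogx_exponent. f_equal. field. lra.
Qed.

Lemma P1plus_intro a K C N pi : prob_dist pi -> 0 < a -> 0 <= C -> (2 <= N)%nat ->
  (forall x, (N <= x)%nat -> tail pi x <= C * exp (xlogx_exponent a K (INR x))) ->
  P1plus a pi.
Proof.
  intros Hpi Ha HC HN Htail. split; [exact Hpi |].
  exists (fun n => (- K / a) / ln (INR n)).
  split; [apply const_div_ln_vanishes |].
  exists (C + 1), N. split; [lra |]. split; [lia |].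
  intros x Hx.
  rewrite xlogx_profile_as_exponent by (lra || lia).
  replace (- (a * (- K / a))) with K by (field; lra).
  pose proof (exp_pos (xlogx_exponent a K (INR x))).
  specialize (Htail x Hx). nra.
Qed.

Lemma P1minus_intro a K c N pi : prob_dist pi -> 0 < a -> 0 < c -> (2 <= N)%nat ->
  (forall x, (N <= x)%nat -> c * exp (xlogx_exponent a K (INR x)) <= tail pi x) ->
  P1minus a pi.
Proof.
  intros Hpi Ha Hc HN Htail. split; [exact Hpi |].
  exists (fun n => (- K / a) / ln (INR n)).
  split; [apply const_div_ln_vanishes |].
  exists (/ c), N. split; [apply Rinv_0_lt_compat; lra |]. split; [lia |].
  intros x Hx.
  rewrite xlogx_profile_as_exponent by (lra || lia).
  replace (- (a * (- K / a))) with K by (field; lra).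
  apply (Rmult_le_reg_l c); [lra |].
  rewrite <- Rmult_assoc, Rinv_r, Rmult_1_l by lra. exact (Htail x Hx).
Qed.

Lemma ratio_comparison (p L r : nat -> R) N : 0 <= p N -> 0 < L N ->
  (forall x, (N <= x)%nat -> 0 <= r x /\ r x * p x <= p (S x) /\ L (S x) <= r x * L x) ->
  forall x, (N <= x)%nat -> p N / L N * L x <= p x.
Proof.
  intros HpN HLN Hstep x Hx. induction Hx as [| x Hx IH].
  - right. field. lra.
  - destruct (Hstep x Hx) as [Hr [Hp HL]].
    assert (Hc : 0 <= p N / L N) by (apply Rdiv_le_0_compat; lra).
    apply Rle_trans with (p N / L N * (r x * L x)); [apply Rmult_le_compat_l; lra |].
    apply Rle_trans with (r x * p x); [| exact Hp].
    replace (p N / L N * (r x * L x)) with (r x * (p N / L N * L x)) by ring.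
    apply Rmult_le_compat_l; lra.
Qed.

Lemma factorial_profile_step c x : 0 < c -> (1 <= x)%nat ->
  exp (xlogx_exponent 1 (- Rabs (ln c)) (INR (S x)))
  <= c / (INR x + 1) * exp (xlogx_exponent 1 (- Rabs (ln c)) (INR x)).
Proof.
  intros Hc Hx. pose proof (le_INR 1 x Hx) as HX. simpl (INR 1) in HX.
  rewrite S_INR, exp_scaled by lra. apply exp_monotone.
  pose proof (exponent_unit_step 1 (- Rabs (ln c)) (INR x) ltac:(lra) HX).
  pose proof (Rabs_maj2 (ln c)). lra.
Qed.

Lemma prob_dist_has_positive_mass pi : prob_dist pi -> exists n, 0 < pi n.
Proof.
  intros [Hnn Hsum].
  apply not_all_not_ex. intro Hnone.
  assert (Hzero : forall n, pi n = 0 * pi n)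
    by (intro n; specialize (Hnone n); specialize (Hnn n); lra).
  pose proof (is_series_unique _ _ (is_series_ext _ _ _ Hzero Hsum)) as Hsum_zero.
  rewrite Series_scal_l in Hsum_zero. lra.
Qed.

Lemma tail_ge_term pi x : prob_dist pi -> pi x <= tail pi x.
Proof.
  intros [Hnn Hsum]. unfold tail.
  assert (Hex : ex_series (fun k => pi (x + k)%nat))
    by (apply ex_series_incr_n; exists 1; exact Hsum).
  rewrite Series_incr_1, Nat.add_0_r by exact Hex.
  assert (Hrest : 0 <= Series (fun k => pi (x + S k)%nat)).
  { rewrite <- (Rmult_0_l (Series (fun k => pi (x + S k)%nat))), <- Series_scal_l.
    apply Series_le; [intro n; rewrite Rmult_0_l; split; [lra | apply Hnn] |].
    apply (ex_series_incr_1 (fun k => pi (x + k)%nat)). exact Hex. }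
  lra.
Qed.

Lemma tail_le_geometric pi x M : prob_dist pi ->
  (forall k, pi (x + k)%nat <= M * (1 / 2) ^ k) -> tail pi x <= 2 * M.
Proof.
  intros [Hnn _] Hgeo. unfold tail.
  assert (Hsum : is_series (fun k => (1 / 2) ^ k) 2).
  { assert (Hq : Rabs (1 / 2) < 1) by (rewrite Rabs_pos_eq; lra).
    pose proof (is_series_geom (1 / 2) Hq) as Hgeom.
    replace (/ (1 - 1 / 2)) with 2 in Hgeom by field. exact Hgeom. }
  replace (2 * M) with (Series (fun k => M * (1 / 2) ^ k))
    by (rewrite Series_scal_l, (is_series_unique (pow (1 / 2)) 2 Hsum); ring).
  apply Series_le; [intro k; split; [apply Hnn | apply Hgeo] |].
  apply (ex_series_scal_l (V := R_NormedModule) M). exists 2. exact Hsum.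
Qed.

Fixpoint prefix_sum (f : nat -> R) (n : nat) : R :=
  match n with O => 0 | S m => prefix_sum f m + f m end.

Definition window_sum (f : nat -> R) (lo hi : nat) : R :=
  prefix_sum f hi - prefix_sum f lo.

Lemma window_sum_extend_right f lo hi :
  window_sum f lo (S hi) = window_sum f lo hi + f hi.
Proof. unfold window_sum. simpl. ring. Qed.

Lemma window_sum_shift f lo hi :
  window_sum f (S lo) (S hi) = window_sum f lo hi + f hi - f lo.
Proof. unfold window_sum. simpl. ring. Qed.

Lemma window_sum_le_const f lo m M : (forall y, (lo <= y < lo + m)%nat -> f y <= M) ->
  window_sum f lo (lo + m) <= INR m * M.
Proof.
  induction m as [| m IH]; intro Hbound.
  - unfold window_sum. rewrite Nat.add_0_r. simpl. lra.
  - rewrite Nat.add_succ_r, window_sum_extend_right, S_INR.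
    assert (f (lo + m)%nat <= M) by (apply Hbound; lia).
    assert (window_sum f lo (lo + m) <= INR m * M) by (apply IH; intros; apply Hbound; lia).
    lra.
Qed.

Lemma window_sum_split f lo mid hi :
  window_sum f lo hi = window_sum f lo mid + window_sum f mid hi.
Proof. unfold window_sum. ring. Qed.

Lemma window_sum_nonneg f lo hi : (forall z, 0 <= f z) -> (lo <= hi)%nat ->
  0 <= window_sum f lo hi.
Proof.
  intros Hnn Hle. induction Hle as [| hi Hle IH]; [unfold window_sum; lra |].
  rewrite window_sum_extend_right. specialize (Hnn hi). lra.
Qed.

Lemma window_sum_ge_term f lo hi y : (forall z, 0 <= f z) -> (lo <= y < hi)%nat ->
  f y <= window_sum f lo hi.
Proof.
  intros Hnn Hy.
  rewrite (window_sum_split f lo y hi), (window_sum_split f y (S y) hi).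
  replace (window_sum f y (S y)) with (f y) by (unfold window_sum; simpl; ring).
  pose proof (window_sum_nonneg f lo y Hnn ltac:(lia)).
  pose proof (window_sum_nonneg f (S y) hi Hnn ltac:(lia)). lra.
Qed.

Lemma inflow_up_succ pi x g : inflow pi (S x) (1%Z, g) = g x * pi x.
Proof.
  unfold inflow. destruct Z_lt_dec; [lia |].
  replace (Z.to_nat (Z.of_nat (S x) - 1)) with x by lia. reflexivity.
Qed.

Lemma inflow_up_zero pi g : inflow pi 0 (1%Z, g) = 0.
Proof. unfold inflow. destruct Z_lt_dec; [reflexivity | lia]. Qed.

Lemma inflow_down pi x g : inflow pi x ((-1)%Z, g) = g (S x) * pi (S x).
Proof.
  unfold inflow. destruct Z_lt_dec; [lia |].
  replace (Z.to_nat (Z.of_nat x - -1)) with (S x) by lia. reflexivity.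
Qed.

Lemma inflow_jump_reachable pi x j g : (j <= x)%nat ->
  inflow pi x (Z.of_nat j, g) = g (x - j)%nat * pi (x - j)%nat.
Proof.
  intro Hjx. unfold inflow. destruct Z_lt_dec; [lia |].
  replace (Z.to_nat (Z.of_nat x - Z.of_nat j)) with (x - j)%nat by lia. reflexivity.
Qed.

Lemma inflow_jump_unreachable pi x j g : (x < j)%nat -> inflow pi x (Z.of_nat j, g) = 0.
Proof. intro Hxj. unfold inflow. destruct Z_lt_dec; [reflexivity | lia]. Qed.

Section FluxBalance.
Variables (birth death burst : nat -> R) (j : nat) (pi : nat -> R).
Hypothesis j_pos : (1 <= j)%nat.
Hypothesis death_at_zero : death 0%nat = 0.
Hypothesis master :
  master_eq ((1%Z, birth) :: ((-1)%Z, death) :: (Z.of_nat j, burst) :: nil) pi.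

(* Proved by summing the master equation over 0..x. *)
Lemma flux_balance x :
  death (S x) * pi (S x)
  = birth x * pi x + window_sum (fun y => burst y * pi y) (S x - j) (S x).
Proof.
  induction x as [| x IH].
  - pose proof (master 0%nat) as M.
    unfold sumR, outflow in M. cbn [List.map List.fold_right] in M.
    rewrite inflow_up_zero, inflow_down, inflow_jump_unreachable in M by lia.
    replace (1 - j)%nat with 0%nat by lia.
    unfold window_sum. simpl. rewrite death_at_zero in M. lra.
  - pose proof (master (S x)) as M.
    unfold sumR, outflow in M. cbn [List.map List.fold_right] in M.
    rewrite inflow_up_succ, inflow_down in M.
    destruct (le_lt_dec j (S x)) as [Hle | Hlt].
    + rewrite inflow_jump_reachable in M by lia.
      replace (S (S x) - j)%nat with (S (S x - j)) by lia.
      rewrite window_sum_shift. lra.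
    + rewrite inflow_jump_unreachable in M by lia.
      replace (S (S x) - j)%nat with 0%nat by lia.
      replace (S x - j)%nat with 0%nat in IH by lia.
      rewrite window_sum_extend_right. lra.
Qed.

End FluxBalance.

Definition death_rate (km1 k3 : R) (x : nat) : R :=
  km1 * INR x + k3 * INR x * (INR x - 1) * (INR x - 2).

Definition burst_rate (k2 : R) (x : nat) : R := k2 * INR x * (INR x - 1).

Lemma falling2_nonneg n : 0 <= INR n * (INR n - 1).
Proof. destruct n as [| n]; [simpl; lra |]. rewrite S_INR. pose proof (pos_INR n). nra. Qed.

Lemma falling3_nonneg n : 0 <= INR n * (INR n - 1) * (INR n - 2).
Proof.
  destruct n as [| [| [| n]]]; [simpl; lra .. |].
  pose proof (le_INR 3 (S (S (S n))) ltac:(lia)). simpl INR in *. nra.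
Qed.

Section Network.
Variables (k0 km1 k2 k3 : R) (j : nat) (pi : nat -> R).
Hypotheses (k0_pos : 0 < k0) (km1_pos : 0 < km1) (k2_pos : 0 < k2) (k3_pos : 0 < k3).
Hypothesis j_pos : (1 <= j)%nat.
Hypothesis stat : stationary (network k0 km1 k2 k3 j) pi.

Local Notation J := (INR j).
Local Notation death := (death_rate km1 k3).
Local Notation burst_flux := (fun y => burst_rate k2 y * pi y).

Lemma pi_nonneg y : 0 <= pi y.
Proof. apply stat. Qed.

Lemma network_flux x :
  death (S x) * pi (S x) = k0 * pi x + window_sum burst_flux (S x - j) (S x).
Proof.
  apply (flux_balance (fun _ => k0) death (burst_rate k2) j pi j_pos).
  - unfold death_rate. simpl. ring.
  - apply stat.
Qed.

Lemma burst_flux_nonneg y : 0 <= burst_flux y.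
Proof.
  unfold burst_rate. pose proof (falling2_nonneg y). pose proof (pi_nonneg y).
  replace (k2 * INR y * (INR y - 1) * pi y) with (k2 * (INR y * (INR y - 1)) * pi y) by ring.
  apply Rmult_le_pos; [apply Rmult_le_pos |]; lra.
Qed.

Lemma death_pos x : 0 < death (S x).
Proof.
  unfold death_rate. pose proof (falling3_nonneg (S x)).
  pose proof (lt_0_INR (S x) ltac:(lia)). nra.
Qed.

Lemma pi_pos_succ x : 0 < pi x -> 0 < pi (S x).
Proof.
  intro Hx. pose proof (network_flux x) as Hflux. pose proof (death_pos x).
  assert (0 <= window_sum burst_flux (S x - j) (S x)).
  { apply Rle_trans with (burst_flux x); [apply burst_flux_nonneg |].
    apply (window_sum_ge_term burst_flux); [apply burst_flux_nonneg | lia]. }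
  destruct (Rlt_le_dec 0 (pi (S x))) as [Hpos | Hneg]; [exact Hpos |]. nra.
Qed.

Lemma pi_pos_beyond_two : exists N, (2 <= N)%nat /\ 0 < pi N.
Proof.
  destruct (prob_dist_has_positive_mass pi (proj1 stat)) as [n Hn].
  exists (S (S n)). split; [lia |]. apply pi_pos_succ, pi_pos_succ, Hn.
Qed.

(* c such that burst(x) / death(x+1) >= c / (x+1) for x >= 2. *)
Definition ratio_const := k2 / (km1 / 2 + k3).

Lemma ratio_const_pos : 0 < ratio_const.
Proof. unfold ratio_const. apply Rdiv_lt_0_compat; lra. Qed.

(* Keeping only the bursts from x itself in the flux balance:
   death(x+1) pi(x+1) >= burst(x) pi(x), and burst(x)/death(x+1) >= c/(x+1). *)
Lemma pi_ratio_lower x : (2 <= x)%nat -> ratio_const / (INR x + 1) * pi x <= pi (S x).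
Proof.
  intro Hx. pose proof (network_flux x) as Hflux.
  assert (Hburst : burst_flux x <= window_sum burst_flux (S x - j) (S x))
    by (apply (window_sum_ge_term burst_flux); [apply burst_flux_nonneg | lia]).
  pose proof (pi_nonneg x) as Hpi. pose proof (death_pos x).
  pose proof (le_INR 2 x Hx) as HX. simpl (INR 2) in HX.
  set (X := INR x) in *.
  assert (HX2 : 2 <= X * (X - 1)) by nra.
  assert (Hdeath : death (S x) = (X + 1) * (km1 + k3 * (X * (X - 1))))
    by (unfold death_rate; rewrite S_INR; fold X; ring).
  assert (Hc : ratio_const * (km1 + k3 * (X * (X - 1))) <= k2 * (X * (X - 1))).
  { assert (E : ratio_const * (km1 / 2 + k3) = k2) by (unfold ratio_const; field; lra).
    assert (km1 + k3 * (X * (X - 1)) <= (km1 / 2 + k3) * (X * (X - 1))) by nra.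
    rewrite <- E, Rmult_assoc. apply Rmult_le_compat_l; [apply Rlt_le, ratio_const_pos | lra]. }
  apply (Rmult_le_reg_l (death (S x))); [lra |].
  rewrite Hdeath at 1.
  replace ((X + 1) * (km1 + k3 * (X * (X - 1))) * (ratio_const / (X + 1) * pi x))
    with (ratio_const * (km1 + k3 * (X * (X - 1))) * pi x) by (field; lra).
  apply Rle_trans with (k2 * (X * (X - 1)) * pi x); [apply Rmult_le_compat_r; lra |].
  assert (Hself : burst_rate k2 x * pi x = k2 * (X * (X - 1)) * pi x)
    by (unfold burst_rate; fold X; ring).
  pose proof (Rmult_le_pos _ _ (Rlt_le _ _ k0_pos) Hpi).
  rewrite Hflux. lra.
Qed.

Lemma network_lower_tail : P1minus 1 pi.
Proof.
  set (K := Rabs (ln ratio_const)).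
  set (L := fun x => exp (xlogx_exponent 1 (- K) (INR x))).
  destruct pi_pos_beyond_two as [N [HN HpiN]].
  assert (HLN : 0 < L N) by apply exp_pos.
  assert (Hcomp : forall x, (N <= x)%nat -> pi N / L N * L x <= pi x).
  { apply (ratio_comparison pi L (fun x => ratio_const / (INR x + 1))); [lra | exact HLN |].
    intros x Hx. pose proof ratio_const_pos. pose proof (pos_INR x).
    split; [apply Rlt_le, Rdiv_lt_0_compat; lra |].
    split; [apply pi_ratio_lower; lia | apply factorial_profile_step; [lra | lia]]. }
  apply (P1minus_intro 1 (- K) (pi N / L N) N); [apply stat | lra | | exact HN |].
  - apply Rdiv_lt_0_compat; lra.
  - intros x Hx. apply Rle_trans with (pi x); [exact (Hcomp x Hx) |].
    apply tail_ge_term, stat.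
Qed.

Definition window_const := 4 * (k0 + k2 * J) / k3.

Lemma J_ge_1 : 1 <= J.
Proof. exact (le_INR 1 j j_pos). Qed.

Lemma window_const_pos : 0 < window_const.
Proof. unfold window_const. pose proof J_ge_1. apply Rdiv_lt_0_compat; nra. Qed.

(* Bounding every burst term of the flux balance by the window maximum V:
   k3 x^3 / 4 * pi(x) <= (k0 + j k2) x^2 V. *)
Lemma pi_window_bound x V : (j + 4 <= x)%nat ->
  (forall y, (x - j <= y < x)%nat -> pi y <= V) -> pi x <= window_const / INR x * V.
Proof.
  intros Hx HV. destruct x as [| m]; [lia |].
  pose proof (network_flux m) as Hflux.
  pose proof (le_INR 4 (S m) ltac:(lia)) as HX. simpl (INR 4) in HX.
  remember (INR (S m)) as X eqn:HXdef.
  pose proof J_ge_1. pose proof (pi_nonneg (S m)) as Hpi.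
  assert (HVm : pi m <= V) by (apply HV; lia).
  assert (HV0 : 0 <= V) by (pose proof (pi_nonneg m); lra).
  assert (Hwindow : window_sum burst_flux (S m - j) (S m) <= J * (k2 * (X * X) * V)).
  { replace (S m) with (S m - j + j)%nat at 2 by lia.
    apply window_sum_le_const. intros y Hy.
    pose proof (le_INR y (S m) ltac:(lia)) as HyX. rewrite <- HXdef in HyX.
    pose proof (falling2_nonneg y). pose proof (pos_INR y). pose proof (pi_nonneg y).
    assert (Hpiy : pi y <= V) by (apply HV; lia).
    unfold burst_rate.
    replace (k2 * INR y * (INR y - 1) * pi y) with (k2 * (INR y * (INR y - 1) * pi y)) by ring.
    apply Rle_trans with (k2 * (X * X * V)); [| right; ring].
    apply Rmult_le_compat_l; [lra |].
    apply Rmult_le_compat; [lra | lra | nra | exact Hpiy]. }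
  assert (Hbirth : k0 * pi m <= k0 * (X * X * V)).
  { apply Rmult_le_compat_l; [lra |]. assert (HX2 : 1 <= X * X) by nra.
    assert (0 <= (X * X - 1) * V) by (apply Rmult_le_pos; lra). lra. }
  assert (Hdeath : k3 * (X * X * X) / 4 <= death (S m)).
  { unfold death_rate. rewrite <- HXdef.
    assert (X * X * X / 4 <= X * (X - 1) * (X - 2)) by nra. nra. }
  assert (Hcubic : k3 * (X * X * X) / 4 * pi (S m) <= (k0 + J * k2) * (X * X) * V).
  { apply Rle_trans with (death (S m) * pi (S m)); [apply Rmult_le_compat_r; lra |].
    replace ((k0 + J * k2) * (X * X) * V) with (k0 * (X * X * V) + J * (k2 * (X * X) * V))
      by ring.
    lra. }
  assert (Hcube : 0 < k3 * (X * X * X) / 4)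
    by (apply Rdiv_lt_0_compat; [repeat apply Rmult_lt_0_compat | ]; lra).
  apply (Rmult_le_reg_l _ _ _ Hcube).
  unfold window_const. replace (k3 * (X * X * X) / 4 * (4 * (k0 + k2 * J) / k3 / X * V))
    with ((k0 + J * k2) * (X * X) * V) by (field; lra).
  exact Hcubic.
Qed.

Definition upper_const := 1 + Rabs (ln window_const).

Definition upper_profile (x : nat) : R := exp (xlogx_exponent (1 / J) upper_const (INR x)).

Lemma upper_profile_pos x : 0 < upper_profile x.
Proof. apply exp_pos. Qed.

Lemma upper_profile_window x y : (1 <= y)%nat -> (x - j <= y < x)%nat ->
  window_const / INR x * upper_profile y <= upper_profile x.
Proof.
  intros Hy Hxy. pose proof J_ge_1.
  pose proof (le_INR 1 y Hy) as HY. simpl (INR 1) in HY.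
  assert (Hd : INR x - INR y = INR (x - y)) by (rewrite minus_INR by lia; reflexivity).
  pose proof (le_INR 1 (x - y) ltac:(lia)). pose proof (le_INR (x - y) j ltac:(lia)).
  simpl (INR 1) in *.
  pose proof (exponent_window_step (1 / J) upper_const (INR x) (INR y)) as Hstep.
  unfold upper_profile. rewrite exp_scaled by (apply window_const_pos || lra).
  apply exp_monotone.
  pose proof (Rle_abs (ln window_const)). pose proof (Rabs_pos (ln window_const)).
  assert (ln window_const + 1 <= upper_const) by (unfold upper_const; lra).
  assert (0 <= upper_const) by (unfold upper_const; lra).
  assert (1 / J * (INR x - INR y) <= 1).
  { rewrite Hd. apply (Rmult_le_reg_l J); [lra |]. field_simplify; lra. }
  assert (0 < 1 / J) by (apply Rdiv_lt_0_compat; lra).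
  specialize (Hstep ltac:(lra) ltac:(lra) HY ltac:(lra) ltac:(lra)). lra.
Qed.

Lemma upper_profile_halves y : (1 <= y)%nat ->
  upper_const + ln 2 <= 1 / J * ln (INR y + 1) ->
  upper_profile (S y) <= / 2 * upper_profile y.
Proof.
  intros Hy Hlarge. pose proof J_ge_1. pose proof (le_INR 1 y Hy) as HY. simpl (INR 1) in HY.
  pose proof (exponent_unit_step (1 / J) upper_const (INR y)) as Hstep.
  unfold upper_profile. rewrite S_INR.
  replace (/ 2) with (1 / 2) by field. rewrite exp_scaled, ln_1 by lra.
  apply exp_monotone.
  assert (0 <= 1 / J) by (apply Rlt_le, Rdiv_lt_0_compat; lra).
  specialize (Hstep ltac:(lra) HY). lra.
Qed.

Section BeyondThreshold.
Variable N : nat.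
Hypothesis N_large : (j + 4 <= N)%nat.
Hypothesis N_decay : upper_const + ln 2 <= 1 / J * ln (INR N).

(* B = sum_{y < N} pi(y) / U(y) dominates each ratio pi(y) / U(y) with y < N,
   so pi <= B U below the threshold. *)
Definition initial_const := window_sum (fun y => pi y / upper_profile y) 0 N.

Lemma pi_over_profile_nonneg y : 0 <= pi y / upper_profile y.
Proof. apply Rdiv_le_0_compat; [apply pi_nonneg | apply upper_profile_pos]. Qed.

Lemma initial_const_nonneg : 0 <= initial_const.
Proof.
  apply Rle_trans with (pi 0%nat / upper_profile 0%nat); [apply pi_over_profile_nonneg |].
  apply (window_sum_ge_term (fun y => pi y / upper_profile y));
    [exact pi_over_profile_nonneg | lia].
Qed.

(* Strong induction: below N by the choice of the constant, beyond N because
   the profile is a super-solution of the window recursion. *)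
Lemma pi_le_upper_profile x : pi x <= initial_const * upper_profile x.
Proof.
  induction x as [x IH] using lt_wf_ind.
  pose proof (upper_profile_pos x) as HUx.
  destruct (le_lt_dec N x) as [HxN | HxN].
  - pose proof (le_INR 4 x ltac:(lia)) as HX. simpl (INR 4) in HX.
    pose proof window_const_pos. pose proof initial_const_nonneg as HB.
    apply Rle_trans
      with (window_const / INR x * (initial_const * upper_profile x * INR x / window_const)).
    + apply pi_window_bound; [lia |]. intros y Hy.
      pose proof (upper_profile_window x y ltac:(lia) Hy) as Hwin.
      apply Rle_trans with (initial_const * upper_profile y); [apply IH; lia |].
      replace (initial_const * upper_profile x * INR x / window_const)
        with (initial_const * (upper_profile x * INR x / window_const)) by (field; lra).
      apply Rmult_le_compat_l; [exact HB |].
      apply (Rmult_le_reg_l (window_const / INR x)); [apply Rdiv_lt_0_compat; lra |].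
      replace (window_const / INR x * (upper_profile x * INR x / window_const))
        with (upper_profile x) by (field; lra).
      exact Hwin.
    + right. field. lra.
  - assert (Hle : pi x / upper_profile x <= initial_const)
      by (apply (window_sum_ge_term (fun y => pi y / upper_profile y));
          [exact pi_over_profile_nonneg | lia]).
    apply (Rmult_le_compat_r (upper_profile x)) in Hle; [| lra].
    replace (pi x / upper_profile x * upper_profile x) with (pi x) in Hle by (field; lra).
    exact Hle.
Qed.

Lemma upper_profile_geometric x k : (N <= x)%nat ->
  upper_profile (x + k) <= upper_profile x * (1 / 2) ^ k.
Proof.
  intro Hx. induction k as [| k IH]; [rewrite Nat.add_0_r; simpl; lra |].
  rewrite Nat.add_succ_r.
  assert (Hln : ln (INR N) <= ln (INR (x + k) + 1)).
  { rewrite <- S_INR. apply ln_le; [apply lt_0_INR; lia | apply le_INR; lia]. }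
  pose proof J_ge_1.
  assert (0 <= 1 / J) by (apply Rlt_le, Rdiv_lt_0_compat; lra).
  pose proof (upper_profile_halves (x + k) ltac:(lia) ltac:(nra)).
  pose proof (upper_profile_pos (x + k)). simpl pow. nra.
Qed.

Lemma tail_le_upper_profile x : (N <= x)%nat ->
  tail pi x <= 2 * initial_const * upper_profile x.
Proof.
  intro Hx. rewrite Rmult_assoc. apply tail_le_geometric; [apply stat |].
  intro k. apply Rle_trans with (initial_const * upper_profile (x + k));
    [apply pi_le_upper_profile |].
  rewrite Rmult_assoc. apply Rmult_le_compat_l;
    [exact initial_const_nonneg | exact (upper_profile_geometric x k Hx)].
Qed.

End BeyondThreshold.

Lemma threshold_exists :
  exists N, (j + 4 <= N)%nat /\ upper_const + ln 2 <= 1 / J * ln (INR N).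
Proof.
  pose proof J_ge_1.
  destruct (INR_unbounded (exp (J * (upper_const + ln 2)))) as [n Hn].
  exists (n + j + 4)%nat. split; [lia |].
  assert (Hln : J * (upper_const + ln 2) <= ln (INR (n + j + 4))).
  { rewrite <- (ln_exp (J * (upper_const + ln 2))). apply ln_le; [apply exp_pos |].
    apply Rle_trans with (INR n); [lra | apply le_INR; lia]. }
  apply (Rmult_le_reg_l J); [lra |].
  replace (J * (1 / J * ln (INR (n + j + 4)))) with (ln (INR (n + j + 4))) by (field; lra).
  exact Hln.
Qed.

Lemma network_upper_tail : P1plus (1 / J) pi.
Proof.
  destruct threshold_exists as [N [HN Hdecay]].
  pose proof J_ge_1.
  apply (P1plus_intro (1 / J) upper_const (2 * initial_const N) N); [apply stat | | | lia |].
  - apply Rdiv_lt_0_compat; lra.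
  - pose proof (initial_const_nonneg N HN). lra.
  - intros x Hx. exact (tail_le_upper_profile N HN Hdecay x Hx).
Qed.

End Network.

Theorem mainTheorem11 (k0 km1 k2 k3 : R) (j : nat) :
  0 < k0 -> 0 < km1 -> 0 < k2 -> 0 < k3 -> (1 <= j)%nat ->
  forall pi : nat -> R,
    stationary (network k0 km1 k2 k3 j) pi ->
    P1plus (1 / INR j) pi /\ P1minus 1 pi.
Proof.
  intros Hk0 Hkm1 Hk2 Hk3 Hj pi Hstat. split.
  - exact (network_upper_tail k0 km1 k2 k3 j pi Hk0 Hkm1 Hk2 Hk3 Hj Hstat).
  - exact (network_lower_tail k0 km1 k2 k3 j pi Hk0 Hkm1 Hk2 Hk3 Hj Hstat).
Qed.
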